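(* For $k\geq 0$ let $\mathcal{E}_k(x)=\sum_{n=1}^{\infty}e(n)^{k}x^n$ (with $0^0=1$). Then $\mathcal{E}_0(x)=\frac{x}{1-x}$, and for every $k\geq 1$, $$\mathcal{E}_k(x)-\mathcal{E}_k(x^2)-\frac{x^2+1}{x}\,\mathcal{E}_k(x^4)=\sum_{j=0}^{k-1}C(k,j)\left(\mathcal{E}_j(x^2)+\frac{x^2+1}{x}\,\mathcal{E}_j(x^4)\right),$$ where $C(k,j)=\binom{k}{j}$.
   Context: The Stern polynomials $B_n(t)\in\mathbb{Z}[t]$ are defined by $B_0(t)=0$, $B_1(t)=1$, and for $n\geq 1$: $B_{2n}(t)=tB_n(t)$, $B_{2n+1}(t)=B_n(t)+B_{n+1}(t)$. For $n\geq1$ let $e(n)=\deg B_n(t)$. *)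

(* Formal power series are represented by their coefficient
   sequences  nat -> int  (coefficient of x^n at index n). *)
From HB Require Import structures.
From mathcomp Require Import all_boot all_order all_algebra.
Set Implicit Arguments. Unset Strict Implicit. Unset Printing Implicit Defensive.
Import GRing.Theory Num.Theory.
Local Open Scope ring_scope.

(* Stern polynomials, computed with fuel: stern_fuel f n = B_n whenever n <= f. *)
Fixpoint stern_fuel (f n : nat) : {poly int} :=
  match f with
  | 0 => 0
  | f'.+1 =>
      if n == 0%N then 0
      else if n == 1%N then 1
      else if odd n then stern_fuel f' n./2 + stern_fuel f' (n./2).+1
      else 'X * stern_fuel f' n./2
  end.

Definition stern (n : nat) : {poly int} := stern_fuel n n.

(* e(n) = deg B_n(t)  (size = degree + 1). *)
Definition e (n : nat) : nat := (size (stern n)).-1.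

Definition series := nat -> int.

(* E_k(x) = sum_{n>=1} e(n)^k x^n  (with 0^0 = 1, as for expn). *)
Definition E (k : nat) : series :=
  fun n => if n == 0%N then 0 else ((e n ^ k)%N)%:Z.

Definition x_over_1mx : series := fun n => if n == 0%N then 0 else 1.

Definition subst_pow (d : nat) (a : series) : series :=
  fun m => if (d %| m)%N then a (m %/ d)%N else 0.

(* A(x) |-> ((x^2+1)/x) A(x) = x A(x) + A(x)/x ; this is a power series
   when A has zero constant term (which is the case for A = E_j(x^4)). *)
Definition mul_xpxinv (a : series) : series :=
  fun m => a m.+1 + (if m is m'.+1 then a m' else 0).

From HB Require Import structures.
From mathcomp Require Import all_boot all_order all_algebra zify.
Import GRing.Theory Num.Theory.
Local Open Scope ring_scope.

(* The identity is read coefficientwise.  Write T_j(m) for the coefficient of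
   x^m in E_j(x^2) + ((x^2+1)/x) E_j(x^4).  For every m >= 0 exactly one of the
   three series contributes, at index

       parent m  =  m/2 (m even),  (m-1)/4 (m = 4q+1),  (m+1)/4 (m = 4q+3),

   so that T_j(m) = E_j(parent m) for all j.  On the other side the recursion of
   the Stern polynomials gives  e(m) = e(parent m) + 1  whenever parent m > 0;
   this uses that Stern polynomials have nonnegative coefficients (so degrees
   add as maxima) and that consecutive degrees differ by at most one.  Hence,
   with a = e(parent m), the coefficient identity for k >= 1 reads
       (a+1)^k - a^k = sum_{j<k} C(k,j) a^j,
   the binomial theorem, while for parent m = 0 (i.e. m <= 1) both sides vanish. *)

Lemma stern_fuel_stable f g n :
  (n <= f)%N -> (n <= g)%N -> stern_fuel f n = stern_fuel g n.
Proof.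
elim: f g n => [|f IH] [|g] n //=; rewrite ?leqn0.
- by move=> /eqP ->.
- by move=> _ /eqP ->.
move=> hf hg; case: ifP => // /negbT n0; case: ifP => // /negbT n1.
have hhalf := odd_double_half n; rewrite -addnn in hhalf.
by case: ifP => on; rewrite on in hhalf; congr (_ _ _); apply: IH; lia.
Qed.

Lemma stern_rec n : stern n =
  if n == 0%N then 0 else if n == 1%N then 1
  else if odd n then stern n./2 + stern (n./2).+1 else 'X * stern n./2.
Proof.
rewrite {1}/stern (@stern_fuel_stable n n.+1 n) //= /stern.
case: ifP => // /negbT n0; case: ifP => // /negbT n1.
have hhalf := odd_double_half n; rewrite -addnn in hhalf.
case: ifP => on; rewrite on in hhalf.
- by rewrite (@stern_fuel_stable n n./2) ?(@stern_fuel_stable n (n./2).+1) //; lia.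
- by rewrite (@stern_fuel_stable n n./2) //; lia.
Qed.

Lemma stern_double n : (0 < n)%N -> stern (2 * n) = 'X * stern n.
Proof.
move=> n_gt0; rewrite stern_rec mul2n odd_double doubleK.
by rewrite ifF ?ifF //; apply/negbTE; lia.
Qed.

Lemma stern_double_add1 n : stern (2 * n + 1) = stern n + stern n.+1.
Proof.
rewrite stern_rec ifF; last by apply/negbTE; lia.
have [->|n_gt0] := posnP n; first by rewrite /stern /= add0r.
rewrite ifF; last by apply/negbTE; lia.
by rewrite addn1 mul2n /= odd_double uphalf_double.
Qed.

Section NonnegPoly.
Variable R : numDomainType.

Definition nonneg_poly (p : {poly R}) : Prop := forall i, 0 <= p`_i.

(* No cancellation can occur when adding polynomials with nonnegative
   coefficients, so the degree of a sum is the larger of the two degrees. *)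
Lemma size_add_nonneg (p q : {poly R}) :
  nonneg_poly p -> nonneg_poly q -> size (p + q) = maxn (size p) (size q).
Proof.
wlog le_pq : p q / (size q <= size p)%N.
  move=> hwlog hp hq; case/orP: (leq_total (size q) (size p)) => le; first exact: hwlog.
  by rewrite addrC maxnC hwlog.
move=> hp hq; rewrite (maxn_idPl le_pq); apply/anti_leq/andP; split.
  by rewrite -(maxn_idPl le_pq) size_polyD.
have [->|p_neq0] := eqVneq p 0; first by rewrite size_poly0.
have lead_neq0 : (p + q)`_(size p).-1 != 0.
  by rewrite coefD paddr_eq0 // negb_and -lead_coefE lead_coef_eq0 p_neq0.
have := size_poly_gt0 p; rewrite p_neq0 => /prednK <-.
by apply: contraNT lead_neq0; rewrite -leqNgt => /leq_sizeP ->.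
Qed.

End NonnegPoly.

Arguments nonneg_poly {R} p.

Lemma stern_nonneg_neq0 n : nonneg_poly (stern n) /\ ((0 < n)%N -> stern n != 0).
Proof.
elim/ltn_ind: n => n IH; rewrite stern_rec.
case: eqP => [->|/eqP n0]; first by split=> // i; rewrite coef0.
case: eqP => [->|/eqP n1]; first by split=> [i|]; rewrite ?oner_neq0 // coef1; case: eqP.
have hhalf := odd_double_half n; rewrite -addnn in hhalf.
have [nn_half neq0_half] := IH n./2 ltac:(lia).
case: ifP => on; rewrite on in hhalf.
- have [nn_next neq0_next] := IH (n./2).+1 ltac:(lia).
  split=> [i|_]; first by rewrite coefD addr_ge0.
  by rewrite -size_poly_gt0 size_add_nonneg // leq_max !size_poly_gt0 neq0_next ?orbT.
- split=> [i|_]; first by rewrite coefXM; case: eqP.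
  by rewrite mulf_neq0 ?polyX_eq0 // neq0_half //; lia.
Qed.

Lemma e_0 : e 0 = 0%N. Proof. by rewrite /e /stern /= size_poly0. Qed.
Lemma e_1 : e 1 = 0%N. Proof. by rewrite /e /stern /= size_poly1. Qed.

Lemma e_double n : (0 < n)%N -> e (2 * n) = (e n).+1.
Proof.
move=> n_gt0; have neq0 := (stern_nonneg_neq0 n).2 n_gt0.
rewrite /e stern_double // mulrC size_mulX //.
by move: neq0; rewrite -size_poly_gt0 => /prednK ->.
Qed.

Lemma e_double_add1 n : e (2 * n + 1) = maxn (e n) (e n.+1).
Proof.
rewrite /e stern_double_add1 size_add_nonneg; try exact: (stern_nonneg_neq0 _).1.
by rewrite -!subn1 subn_maxl.
Qed.

Lemma e_succ_bounds n : (e n.+1 <= (e n).+1 /\ e n <= (e n.+1).+1)%N.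
Proof.
elim/ltn_ind: n => n IH.
have hhalf := odd_double_half n; rewrite -addnn in hhalf.
move: hhalf; case: (boolP (odd n)) => on /=; set j := n./2 => hhalf.
-
  have [hi lo] := IH j ltac:(lia).
  have -> : n = (2 * j + 1)%N by lia.
  have -> : (2 * j + 1).+1 = (2 * j.+1)%N by lia.
  rewrite e_double // e_double_add1; lia.
-
  have [j0|j_gt0] := posnP j.
    have -> : n = 0%N by lia.
    by rewrite e_0 e_1.
  have [hi lo] := IH j ltac:(lia).
  have -> : n = (2 * j)%N by lia.
  rewrite -addn1 e_double_add1 e_double //; lia.
Qed.

Lemma e_4n1 n : (0 < n)%N -> e (4 * n + 1) = (e n).+1.
Proof.
move=> n_gt0; have -> : (4 * n + 1 = 2 * (2 * n) + 1)%N by lia.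
rewrite e_double_add1 e_double ?muln_gt0 // -(addn1 (2 * n)) e_double_add1.
have := e_succ_bounds n; lia.
Qed.

Lemma e_4n3 n : e (4 * n + 3) = (e n.+1).+1.
Proof.
have -> : (4 * n + 3 = 2 * (2 * n + 1) + 1)%N by lia.
rewrite e_double_add1 e_double_add1.
have -> : (2 * n + 1).+1 = (2 * n.+1)%N by lia.
rewrite e_double //.
have := e_succ_bounds n; lia.
Qed.

(* The index whose coefficient feeds x^m in E_j(x^2) + ((x^2+1)/x) E_j(x^4):
   m/2 for m even, (m-1)/4 for m = 4q+1 and (m+1)/4 for m = 4q+3. *)
Definition parent (m : nat) : nat :=
  if odd m then (if m %% 4 == 1 then m %/ 4 else (m %/ 4).+1)%N else m./2.

Variant parent_spec (m : nat) : nat -> Prop :=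
  | ParentEven n of m = (2 * n)%N : parent_spec m n
  | Parent4n1 q of m = (4 * q + 1)%N : parent_spec m q
  | Parent4n3 q of m = (4 * q + 3)%N : parent_spec m q.+1.

Lemma parentP m : parent_spec m (parent m).
Proof.
rewrite /parent; case: ifP => om; last by apply: ParentEven; lia.
by case: eqP => r; [apply: Parent4n1 | apply: Parent4n3]; lia.
Qed.

Lemma subst_pow_mul d (a : series) m : (0 < d)%N -> subst_pow d a (d * m)%N = a m.
Proof. by move=> d_gt0; rewrite /subst_pow dvdn_mulr // mulKn. Qed.

Lemma subst_pow_ndvd d (a : series) m : ~~ (d %| m)%N -> subst_pow d a m = 0.
Proof. by rewrite /subst_pow => /negbTE ->. Qed.

Definition E_lift (j : nat) : series :=
  fun m => subst_pow 2 (E j) m + mul_xpxinv (subst_pow 4 (E j)) m.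

Lemma mul_xpxinv_pos (a : series) m :
  (0 < m)%N -> mul_xpxinv a m = a m.+1 + a m.-1.
Proof. by case: m. Qed.

Lemma E_lift_parent j m : E_lift j m = E j (parent m).
Proof.
rewrite /E_lift; case: parentP => [[|n]|q|q] -> //.
- rewrite mul_xpxinv_pos // subst_pow_mul // !subst_pow_ndvd ?addr0 //; lia.
- rewrite mul_xpxinv_pos ?addn1 // subst_pow_ndvd; last by lia.
  have -> : (4 * q).+1.-1 = (4 * q)%N by [].
  by rewrite subst_pow_mul // subst_pow_ndvd ?add0r //; lia.
- rewrite mul_xpxinv_pos ?addn3 // subst_pow_ndvd; last by lia.
  have -> : (4 * q).+3.+1 = (4 * q.+1)%N by lia.
  by rewrite subst_pow_mul // subst_pow_ndvd ?add0r ?addr0 //; lia.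
Qed.

Lemma e_parent m : (0 < parent m)%N -> e m = (e (parent m)).+1.
Proof. by case: parentP => [n|q|q] -> p_gt0; [exact: e_double|exact: e_4n1|exact: e_4n3]. Qed.

Lemma parent_eq0 m : parent m = 0%N -> (m <= 1)%N.
Proof. by case: parentP => [n|q|q] -> // ->. Qed.

Lemma E_pos j n : (0 < n)%N -> E j n = (e n)%:Z ^+ j.
Proof. by case: n => // n _; rewrite /E -!natz natrX. Qed.

Lemma sum_binomial_lower (R : pzRingType) (x : R) k :
  \sum_(j < k) 'C(k, j)%:R * x ^+ j = (x + 1) ^+ k - x ^+ k.
Proof.
rewrite exprD1n big_ord_recr /= binn mulr1n addrK.
by apply: eq_bigr => j _; rewrite mulr_natl.
Qed.

Theorem mainTheorem19 :
  (forall n : nat, E 0 n = x_over_1mx n) /\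
  (forall k : nat, (1 <= k)%N -> forall m : nat,
     E k m - subst_pow 2 (E k) m - mul_xpxinv (subst_pow 4 (E k)) m
     = \sum_(j < k) ('C(k, j))%:R
          * (subst_pow 2 (E j) m + mul_xpxinv (subst_pow 4 (E j)) m)).
Proof.
split=> [n|k k_gt0 m]; first by rewrite /E /x_over_1mx expn0.
rewrite -addrA -opprD -/(E_lift k m) E_lift_parent.
under eq_bigr => j _ do rewrite -/(E_lift j m) E_lift_parent.
have [p0|p_gt0] := posnP (parent m).
-
  have E_m : E k m = 0.
    have : m = 0%N \/ m = 1%N by have := parent_eq0 m p0; lia.
    by case=> ->; rewrite /E // e_1 exp0n.
  by rewrite p0 E_m subr0 big1 // => j _; rewrite mulr0.
- (* with a = e(parent m): (a+1)^k - a^k = sum_{j<k} C(k,j) a^j *)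
  have m_gt0 : (0 < m)%N by case: m p_gt0.
  rewrite (E_pos k m m_gt0) (E_pos k _ p_gt0) e_parent //.
  under eq_bigr => j _ do rewrite (E_pos j _ p_gt0).
  by rewrite sum_binomial_lower -addn1 PoszD.
Qed.
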